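(* Let $k\ge1$ and let $F$ be a partially colored forest. If Alice can win the $k$-Modified Coloring Game on every trunk in $\mathcal{R}(F)$, then she can win the $k$-Modified Coloring Game on $\mathcal{R}(F)$.
   Context: A partial coloring of a graph assigns to some vertices colors from a fixed set $C$ of $k$ colors so that adjacent colored vertices receive different colors; a color is legal for an uncolored vertex $v$ if no neighbor of $v$ has that color. The $k$-Modified Coloring Game ($k$-MCG) on a partially colored graph: Bob and Alice alternate turns, Bob first, each turn coloring an uncolored vertex with a legal color from $C$, except that Bob may choose to pass on any of his turns. Bob wins if at some point an uncolored vertex has no legal color; Alice wins if every vertex becomes colored. For a partially colored forest $F$, a trunk of $F$ is a maximal connected subgraph $R$ of $F$ such that every colored vertex of $R$ is a leaf of $R$. $\mathcal{R}(F)$ denotes the partially colored forest that is the disjoint union of all trunks of $F$ (a colored vertex lying in several trunks appears as a separate colored copy in each of them). *)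

From mathcomp Require Import all_boot.
Set Implicit Arguments. Unset Strict Implicit. Unset Printing Implicit Defensive.

(* A simple graph is a symmetric irreflexive relation [e] on a finType.
   A partial coloring with the fixed color set C = 'I_k is a map
   V -> option 'I_k (None = uncolored). *)

Section Game.
Variables (k : nat) (T : finType) (e : rel T).

Definition pcol := T -> option 'I_k.

Definition proper_pcol (c : pcol) : Prop :=
  forall x y, e x y -> c x != None -> c x != c y.

Definition legal (c : pcol) (v : T) (a : 'I_k) : Prop :=
  forall u, e v u -> c u != Some a.

(* some uncolored vertex has no legal color: Bob has won *)
Definition stuck (c : pcol) : Prop :=
  exists v, c v = None /\ forall a, ~ legal c v a.

Definition all_colored (c : pcol) : Prop := forall v, c v <> None.

Definition upd (c : pcol) (v : T) (a : 'I_k) : pcol :=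
  fun x => if x == v then Some a else c x.

(* [AliceWinsB c]: from position c with Bob to move, Alice has a strategy
   forcing a win; [AliceWinsA c]: same with Alice to move.  Bob may pass. *)
Inductive AliceWinsB (c : pcol) : Prop :=
| AWB_done : all_colored c -> AliceWinsB c
| AWB_step : ~ stuck c ->
    AliceWinsA c ->                                  (* Bob passes *)
    (forall v a, c v = None -> legal c v a -> AliceWinsA (upd c v a)) ->
    AliceWinsB c
with AliceWinsA (c : pcol) : Prop :=
| AWA_done : all_colored c -> AliceWinsA c
| AWA_step : forall v a, ~ stuck c -> c v = None -> legal c v a ->
    AliceWinsB (upd c v a) -> AliceWinsA c.

(* Alice can win the k-MCG on the partially colored graph (T, e, c)
   (Bob moves first). *)
Definition alice_wins_MCG (c : pcol) : Prop := AliceWinsB c.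

End Game.

Section Trunks.
Variables (k : nat) (V : finType) (e : rel V) (c : pcol k V).

Definition forest : Prop :=
  ~ exists p : seq V, [&& 3 <= size p, uniq p & cycle e p].

Definition induced_rel (S : {set V}) : rel V :=
  [rel a b | [&& a \in S, b \in S & e a b]].

Definition connected_set (S : {set V}) : bool :=
  (S != set0) && [forall x in S, forall y in S, connect (induced_rel S) x y].

Definition colored_leaves (S : {set V}) : bool :=
  [forall v in S, (c v != None) ==> (#|[set y in S | e v y]| == 1)].

Definition trunk_prop (S : {set V}) : bool :=
  connected_set S && colored_leaves S.

(* a trunk (identified with its vertex set; in a forest a connected
   subgraph is the induced subgraph on its vertex set) *)
Definition is_trunk (S : {set V}) : bool :=
  trunk_prop S &&
  [forall S' : {set V}, (S \subset S') && trunk_prop S' ==> (S' == S)].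

Definition trunk_rel (S : {set V}) : rel {x : V | x \in S} :=
  fun a b => e (val a) (val b).
Definition trunk_col (S : {set V}) : pcol k {x : V | x \in S} :=
  fun a => c (val a).

(* R(F): disjoint union of all trunks; a vertex is a pair (trunk, vertex) *)
Definition RF_vert := {p : {set V} * V | is_trunk p.1 && (p.2 \in p.1)}.
Definition RF_rel : rel RF_vert :=
  fun a b => ((val a).1 == (val b).1) && e (val a).2 (val b).2.
Definition RF_col : pcol k RF_vert := fun a => c (val a).2.

End Trunks.

Arguments trunk_rel {V} e S.
Arguments trunk_col {k V} c S.
Arguments RF_rel {k V} e c.
Arguments RF_col {k V} e c.
Arguments is_trunk {k V} e c S.

From mathcomp Require Import all_boot.
From Stdlib Require Import FunctionalExtensionality.

Set Implicit Arguments.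
Unset Strict Implicit.
Unset Printing Implicit Defensive.

(* R(F) is the disjoint union of its trunks, and the modified game is
   additive over disjoint unions: Alice answers every move of Bob inside the
   component where it was made, following her winning strategy there, and
   when Bob passes she passes on his behalf in a component that still has an
   uncolored vertex.  Formally, by induction on the number of uncolored
   vertices, a position of the union is winning when Alice wins in every
   component with Bob to move, and also when she wins in one component with
   herself to move and in all the others with Bob to move. *)

Lemma AliceWinsB_not_stuck (k : nat) (T : finType) (e : rel T) (c : pcol k T) :
  AliceWinsB e c -> ~ stuck e c.
Proof. by case=> [hall [v [hv _]] | //]; apply: hall hv. Qed.

Definition uncolored (k : nat) (T : finType) (c : pcol k T) : {set T} :=
  [set x | c x == None].

Lemma card_uncolored_upd (k : nat) (T : finType) (c : pcol k T) v a :
  c v = None -> #|uncolored (upd c v a)| < #|uncolored c|.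
Proof.
move=> hv; apply/proper_card/properP; split.
- by apply/subsetP => x; rewrite !inE /upd; case: (x == v).
- by exists v; rewrite !inE /upd ?eqxx ?hv.
Qed.

Section DisjointUnion.
Variables (k : nat) (W : finType) (E : rel W).
Variables (I : eqType) (T : I -> finType) (e : forall i, rel (T i)).
Variable f : forall i, T i -> W.
Arguments e : clear implicits.
Arguments f : clear implicits.
Hypothesis f_surj : forall w, exists i x, f i x = w.
Hypothesis f_index_inj : forall i j x y, f i x = f j y -> i = j.
Hypothesis f_inj : forall i, injective (f i).
Hypothesis f_edge : forall i x y, e i x y -> E (f i x) (f i y).
Hypothesis edge_in_part : forall i x w, E (f i x) w -> exists2 y, w = f i y & e i x y.

Definition restr (C : pcol k W) i : pcol k (T i) := fun x => C (f i x).
Arguments restr : clear implicits.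

Lemma legal_restr C i x a : legal E C (f i x) a <-> legal (e i) (restr C i) x a.
Proof.
split=> [hl u hu | hl u /edge_in_part [y -> hy]]; [exact: hl (f_edge hu) | exact: hl hy].
Qed.

Lemma restr_upd C i x a : restr (upd C (f i x) a) i = upd (restr C i) x a.
Proof.
apply: functional_extensionality => y; rewrite /restr /upd.
by rewrite (inj_eq (@f_inj i)).
Qed.

Lemma restr_upd_other C i j x a : j != i -> restr (upd C (f i x) a) j = restr C j.
Proof.
move=> hji; apply: functional_extensionality => y; rewrite /restr /upd.
by case: (eqVneq (f j y) (f i x)) => // /f_index_inj hij; rewrite hij eqxx in hji.
Qed.

Lemma not_stuck_union C : (forall i, ~ stuck (e i) (restr C i)) -> ~ stuck E C.
Proof.
move=> hns [w [hw hl]]; have [i [x hx]] := f_surj w; subst w.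
by apply: (hns i); exists x; split=> // a /legal_restr; apply: hl.
Qed.

Definition parts_winB C := forall i, AliceWinsB (e i) (restr C i).

Definition parts_winA_at i C :=
  AliceWinsA (e i) (restr C i) /\ forall j, j != i -> AliceWinsB (e j) (restr C j).

Section Step.
Variable C : pcol k W.
Hypothesis IHB : forall C', #|uncolored C'| < #|uncolored C| ->
  parts_winB C' -> AliceWinsB E C'.

Lemma winA_of_part_move i v a :
  ~ stuck (e i) (restr C i) -> restr C i v = None -> legal (e i) (restr C i) v a ->
  AliceWinsB (e i) (upd (restr C i) v a) ->
  (forall j, j != i -> AliceWinsB (e j) (restr C j)) -> AliceWinsA E C.
Proof.
move=> hns hv hl hwin hother.
apply: (AWA_step (v := f i v) (a := a)) => //.
- apply: not_stuck_union => j; have [->//|hji] := eqVneq j i.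
  exact/AliceWinsB_not_stuck/hother.
- exact/legal_restr.
- apply: IHB; first exact: card_uncolored_upd.
  move=> j; have [->|hji] := eqVneq j i; first by rewrite restr_upd.
  by rewrite restr_upd_other //; apply: hother.
Qed.

Lemma winA_of_parts_winB : parts_winB C -> AliceWinsA E C.
Proof.
move=> hB; have [hall|] := boolP [forall w, C w != None].
  by apply: AWA_done => w; apply/eqP/(forallP hall).
move=> /forallPn [w]; rewrite negbK => /eqP hw.
have [i [x hx]] := f_surj w; subst w.
case: (hB i) => [hall | _ hA _]; first by case: (hall x).
case: hA => [hall | v a hns hv hl hwin]; first by case: (hall x).
by apply: (winA_of_part_move hns hv hl hwin) => j _; apply: hB.
Qed.

Lemma winA_of_parts_winA_at i : parts_winA_at i C -> AliceWinsA E C.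
Proof.
case=> [[hall | v a hns hv hl hwin] hother]; last exact: winA_of_part_move hwin hother.
apply: winA_of_parts_winB => j; have [->|hji] := eqVneq j i; last exact: hother.
exact: AWB_done.
Qed.

Lemma winB_of_parts_winB :
  (forall C' i, #|uncolored C'| < #|uncolored C| -> parts_winA_at i C' ->
     AliceWinsA E C') ->
  parts_winB C -> AliceWinsB E C.
Proof.
move=> IHA hB; have [hall|_] := boolP [forall w, C w != None].
  by apply: AWB_done => w; apply/eqP/(forallP hall).
apply: AWB_step; first by apply: not_stuck_union => j; apply/AliceWinsB_not_stuck.
  exact: winA_of_parts_winB.
move=> w a hw hl; have [i [x hx]] := f_surj w; subst w.
case: (hB i) => [hall | _ _ hmove]; first by case: (hall x).
apply: (IHA _ i); first exact: card_uncolored_upd.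
split; first by rewrite restr_upd; apply: hmove => //; apply/legal_restr.
by move=> j hji; rewrite restr_upd_other //; apply: hB.
Qed.

End Step.

Lemma union_wins C : parts_winB C -> AliceWinsB E C.
Proof.
suff inv n : forall C, #|uncolored C| = n ->
    (parts_winB C -> AliceWinsB E C) /\
    (forall i, parts_winA_at i C -> AliceWinsA E C) by have [] := inv _ C erefl.
elim/ltn_ind: n => n IH C' hn; subst n.
have IHB C'' (lt : #|uncolored C''| < #|uncolored C'|) := (IH _ lt C'' erefl).1.
split; last by move=> i; apply: winA_of_parts_winA_at IHB i.
by apply: winB_of_parts_winB IHB _ => C'' i lt; apply: (IH _ lt C'' erefl).2.
Qed.

End DisjointUnion.

Section TrunkUnion.
Variables (k : nat) (V : finType) (e : rel V) (c : pcol k V).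

Definition trunk := {S : {set V} | is_trunk e c S}.

Definition RF_embed (S : trunk) (x : {x : V | x \in sval S}) : RF_vert e c :=
  exist _ (sval S, sval x) (introT andP (conj (svalP S) (svalP x))).
Arguments RF_embed : clear implicits.

Lemma RF_embed_surj w : exists S x, RF_embed S x = w.
Proof.
case: w => [[S v] /= /[dup] /andP [hS hv] hw].
by exists (exist _ S hS), (exist _ v hv); apply: val_inj.
Qed.

Lemma RF_embed_trunk_inj S S' x x' : RF_embed S x = RF_embed S' x' -> S = S'.
Proof. by move=> /(congr1 (fun w => (sval w).1)) /val_inj. Qed.

Lemma RF_embed_inj S : injective (RF_embed S).
Proof. by move=> x x' /(congr1 (fun w => (sval w).2)) /val_inj. Qed.

Lemma RF_embed_edge S x y :
  trunk_rel e (sval S) x y -> RF_rel e c (RF_embed S x) (RF_embed S y).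
Proof. by rewrite /RF_rel /= eqxx. Qed.

Lemma RF_edge_in_trunk S x w : RF_rel e c (RF_embed S x) w ->
  exists2 y, w = RF_embed S y & trunk_rel e (sval S) x y.
Proof.
have [S' [y <-]] := RF_embed_surj w.
by rewrite /RF_rel /= => /andP [/eqP /val_inj hS hxy]; subst S'; exists y.
Qed.

End TrunkUnion.

Theorem lemma2p2 (k : nat) (V : finType) (e : rel V) (c : pcol k V) :
  1 <= k -> symmetric e -> irreflexive e -> forest e -> proper_pcol e c ->
  (forall S : {set V}, is_trunk e c S ->
     alice_wins_MCG (trunk_rel e S) (trunk_col c S)) ->
  alice_wins_MCG (RF_rel e c) (RF_col e c).
Proof.
move=> _ _ _ _ _ htrunk.
apply: (union_wins (@RF_embed_surj _ _ e c) (@RF_embed_trunk_inj _ _ e c)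
  (@RF_embed_inj _ _ e c) (@RF_embed_edge _ _ e c) (@RF_edge_in_trunk _ _ e c)).
by move=> S; apply: htrunk (svalP S).
Qed.
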